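(* Let $\theta(q,x):=\sum_{j=0}^{\infty}q^{j(j+1)/2}x^j$. For every $q\in(0,0.5]$, the function $x\mapsto\theta(q,x)$ has no zeros in the closed rectangle $\Delta:=\{x\in\mathbb{C}:\ -3\leq\mathrm{Re}\,x\leq 0,\ -3\leq\mathrm{Im}\,x\leq 3\}$. *)

From Stdlib Require Import Reals.
From Coquelicot Require Import Coquelicot.
Open Scope R_scope.

Definition theta_term (q : R) (x : C) (j : nat) : C :=
  Cmult (RtoC (q ^ (Nat.div (j * (j + 1)) 2))) (Cpow x j).

From Stdlib Require Import Reals ZArith Bool Lia Lra.
From Coquelicot Require Import Coquelicot.
Open Scope R_scope.

(* The series satisfies the functional equation θ(q,x) = 1 + q x θ(q,qx). Unrolling it seven
   times writes θ(q,x) as a nested expression 1 + q x (1 + q^2 x (... (1 + q^7 x θ(q,q^7 x))))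
   whose innermost factor lies within 1/25 of 1, since |q^8 x| <= 5/256 on the rectangle
   (where |x| <= 5) and the terms of θ(q,y) - 1 are dominated by the geometric series of q|y|.
   The nested expression is then evaluated in outward-rounded fixed-point interval arithmetic
   over the boxes of an adaptive bisection of (q, Re x, Im x) in [0,1/2] x [-3,0] x [-3,3];
   a computation checked by vm_compute shows that on every box the enclosure avoids 0. *)

Lemma pow_le_pow_of_le_one (q : R) (m n : nat) : 0 <= q <= 1 -> (m <= n)%nat -> q ^ n <= q ^ m.
Proof.
  intros hq hmn.
  replace n with (m + (n - m))%nat by lia.
  rewrite pow_add.
  assert (q ^ (n - m) <= 1) by (rewrite <- (pow1 (n - m)); apply pow_incr; lra).
  assert (0 <= q ^ m) by (apply pow_le; lra).
  nra.
Qed.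

Lemma norm_is_series_le {K : AbsRing} {V : NormedModule K} (a : nat -> V) (b : nat -> R)
  (la : V) (lb : R) :
  (forall n, norm (a n) <= b n) -> is_series a la -> is_series b lb -> norm la <= lb.
Proof.
  intros hab ha hb.
  change (Rbar_le (norm la) lb).
  apply (filterlim_le (F := eventually) (fun n => norm (sum_n a n)) (sum_n b)).
  - exists 0%nat; intros n _.
    eapply Rle_trans; [apply norm_sum_n_m | apply sum_n_m_le; exact hab].
  - eapply filterlim_comp; [exact ha | apply filterlim_norm].
  - exact hb.
Qed.

(** * The theta series *)

Lemma div2_triangle_succ (m : nat) :
  Nat.div (S m * (S m + 1)) 2 = (Nat.div (m * (m + 1)) 2 + S m)%nat.
Proof.
  replace (S m * (S m + 1))%nat with (m * (m + 1) + S m * 2)%nat by lia.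
  apply Nat.div_add; lia.
Qed.

Lemma le_div2_triangle (m : nat) : (m <= Nat.div (m * (m + 1)) 2)%nat.
Proof. induction m as [|m IH]; [simpl; lia | rewrite div2_triangle_succ; lia]. Qed.

Lemma theta_term0 (q : R) (x : C) : theta_term q x 0 = 1%C.
Proof. unfold theta_term; simpl; ring. Qed.

Lemma theta_termS (q : R) (x : C) (m : nat) :
  theta_term q x (S m) = (RtoC q * x * theta_term q (RtoC q * x) m)%C.
Proof.
  unfold theta_term.
  rewrite div2_triangle_succ, pow_add, RtoC_mult, Cpow_mult_l, !RtoC_pow, !Cpow_S.
  ring.
Qed.

Lemma is_series_one_plus (a : nat -> C) (l : C) :
  a 0%nat = 1%C -> is_series (fun m => a (S m)) l -> is_series a (1 + l)%C.
Proof.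
  intros h0 hl. apply is_series_decr_1. rewrite h0.
  match goal with |- is_series _ ?L => replace L with l end; [exact hl |].
  change (l = Cplus (Cplus 1 l) (Copp 1)). ring.
Qed.

Lemma is_series_theta_shift (q : R) (x l : C) :
  is_series (theta_term q (RtoC q * x)) l ->
  is_series (theta_term q x) (1 + RtoC q * x * l)%C.
Proof.
  intro h. apply is_series_one_plus; [apply theta_term0 |].
  eapply is_series_ext; [intro m; symmetry; apply theta_termS |].
  exact (is_series_scal_l (RtoC q * x)%C _ _ h).
Qed.

Lemma Cmod_theta_term_le (q : R) (y : C) (m : nat) :
  0 <= q <= 1 -> Cmod (theta_term q y m) <= (q * Cmod y) ^ m.
Proof.
  intro hq. unfold theta_term.
  rewrite Cmod_mult, Cmod_R, Cmod_pow, Rabs_pos_eq, Rpow_mult_distr by (apply pow_le; lra).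
  apply Rmult_le_compat_r; [apply pow_le, Cmod_ge_0 |].
  apply pow_le_pow_of_le_one; [exact hq | apply le_div2_triangle].
Qed.

Lemma is_series_theta_near_one (q : R) (y : C) :
  0 <= q <= 1 -> q * Cmod y < 1 ->
  exists T, is_series (theta_term q y) (1 + T)%C /\
            Cmod T <= q * Cmod y / (1 - q * Cmod y).
Proof.
  intros hq hr. set (r := q * Cmod y) in *.
  assert (hr0 : 0 <= r) by (unfold r; generalize (Cmod_ge_0 y); nra).
  assert (hgeom : is_series (fun m => r ^ S m) (r / (1 - r))).
  { apply (is_series_scal_l r (fun m => r ^ m)), is_series_geom.
    rewrite Rabs_pos_eq; lra. }
  assert (hbound :
    forall m, @norm C_AbsRing C_NormedModule (theta_term q y (S m)) <= r ^ S m).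
  { intro m; exact (Cmod_theta_term_le q y (S m) hq). }
  destruct (ex_series_le (K := C_AbsRing) (V := C_CompleteNormedModule) _ _ hbound
              (ex_intro _ _ hgeom)) as [T hT].
  exists T; split.
  - exact (is_series_one_plus _ _ (theta_term0 q y) hT).
  - exact (norm_is_series_le _ _ _ _ hbound hT hgeom).
Qed.

(** * Fixed-point interval arithmetic *)

Definition prec : Z := 40.
Definition scale : Z := 2 ^ prec.
Definition fx (z : Z) : R := IZR z / IZR scale.

Lemma scale_pos : 0 < IZR scale.
Proof. apply IZR_lt; reflexivity. Qed.

Lemma fx_add (a b : Z) : fx (a + b) = fx a + fx b.
Proof. unfold fx; rewrite plus_IZR; field; generalize scale_pos; lra. Qed.

Lemma fx_sub (a b : Z) : fx (a - b) = fx a - fx b.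
Proof. unfold fx; rewrite minus_IZR; field; generalize scale_pos; lra. Qed.

Lemma fx_opp (a : Z) : fx (- a) = - fx a.
Proof. unfold fx; rewrite opp_IZR; field; generalize scale_pos; lra. Qed.

Lemma fx_mul (a b : Z) : fx a * fx b = fx (a * b) / IZR scale.
Proof. unfold fx; rewrite mult_IZR; field; generalize scale_pos; lra. Qed.

Lemma fx_mulr (a c : Z) : fx (a * c) = fx a * IZR c.
Proof. unfold fx; rewrite mult_IZR; field; generalize scale_pos; lra. Qed.

Lemma fx_mul_scale (c : Z) : fx (c * scale) = IZR c.
Proof. unfold fx; rewrite mult_IZR; field; generalize scale_pos; lra. Qed.

Lemma fx_scale : fx scale = 1.
Proof. unfold fx; field; generalize scale_pos; lra. Qed.

Lemma fx0 : fx 0 = 0.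
Proof. unfold fx; lra. Qed.

Lemma fx_le (a b : Z) : (a <= b)%Z -> fx a <= fx b.
Proof.
  intro h; apply Rmult_le_compat_r; [left; apply Rinv_0_lt_compat, scale_pos |].
  apply IZR_le, h.
Qed.

Lemma fx_lt (a b : Z) : (a < b)%Z -> fx a < fx b.
Proof.
  intro h; apply Rmult_lt_compat_r; [apply Rinv_0_lt_compat, scale_pos |].
  apply IZR_lt, h.
Qed.

Lemma fx_div_scale_le (a b : Z) : (a <= b)%Z -> fx a / IZR scale <= fx b / IZR scale.
Proof.
  intro h; apply Rmult_le_compat_r; [left; apply Rinv_0_lt_compat, scale_pos |].
  apply fx_le, h.
Qed.

(* [Z.shiftr p prec] is the floor of [p / scale], also for negative [p]. *)
Definition round_down (p : Z) : Z := Z.shiftr p prec.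
Definition round_up (p : Z) : Z := - Z.shiftr (- p) prec.

Lemma round_down_le (p : Z) : fx (round_down p) <= fx p / IZR scale.
Proof.
  unfold round_down; rewrite Z.shiftr_div_pow2 by (unfold prec; lia); fold scale.
  assert (h : (scale * (p / scale) <= p)%Z) by (apply Z.mul_div_le; reflexivity).
  apply fx_div_scale_le in h. rewrite <- fx_mul, fx_scale, Rmult_1_l in h. exact h.
Qed.

Lemma round_up_ge (p : Z) : fx p / IZR scale <= fx (round_up p).
Proof.
  unfold round_up; rewrite fx_opp.
  assert (h := round_down_le (- p)); unfold round_down in h.
  rewrite fx_opp in h; unfold Rdiv in *; lra.
Qed.

Lemma Rmult_corners (a b c d x y : R) : a <= x <= b -> c <= y <= d ->
  (a * c <= x * y \/ a * d <= x * y \/ b * c <= x * y \/ b * d <= x * y) /\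
  (x * y <= a * c \/ x * y <= a * d \/ x * y <= b * c \/ x * y <= b * d).
Proof.
  intros hx hy; split; destruct (Rle_or_lt 0 y).
  - destruct (Rle_or_lt 0 a); [left | right; left]; nra.
  - destruct (Rle_or_lt 0 b); [right; right; left | right; right; right]; nra.
  - destruct (Rle_or_lt 0 b); [right; right; right | right; right; left]; nra.
  - destruct (Rle_or_lt 0 a); [right; left | left]; nra.
Qed.

Definition itv : Type := (Z * Z)%type.
Definition itv_mem (a : itv) (r : R) : Prop := fx (fst a) <= r <= fx (snd a).

Definition itv_add (a b : itv) : itv := (fst a + fst b, snd a + snd b)%Z.
Definition itv_sub (a b : itv) : itv := (fst a - snd b, snd a - fst b)%Z.
Definition itv_mul (a b : itv) : itv :=
  let p1 := (fst a * fst b)%Z in let p2 := (fst a * snd b)%Z in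
  let p3 := (snd a * fst b)%Z in let p4 := (snd a * snd b)%Z in
  (round_down (Z.min (Z.min p1 p2) (Z.min p3 p4)),
   round_up (Z.max (Z.max p1 p2) (Z.max p3 p4))).

Lemma itv_add_correct (a b : itv) (x y : R) :
  itv_mem a x -> itv_mem b y -> itv_mem (itv_add a b) (x + y).
Proof. unfold itv_mem, itv_add; simpl; rewrite !fx_add; lra. Qed.

Lemma itv_sub_correct (a b : itv) (x y : R) :
  itv_mem a x -> itv_mem b y -> itv_mem (itv_sub a b) (x - y).
Proof. unfold itv_mem, itv_sub; simpl; rewrite !fx_sub; lra. Qed.

Lemma itv_mul_correct (a b : itv) (x y : R) :
  itv_mem a x -> itv_mem b y -> itv_mem (itv_mul a b) (x * y).
Proof.
  destruct a as [a1 a2], b as [b1 b2]; unfold itv_mem, itv_mul; simpl; intros hx hy.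
  destruct (Rmult_corners _ _ _ _ _ _ hx hy) as [hlo hhi].
  rewrite !fx_mul in hlo, hhi. split.
  - eapply Rle_trans; [apply round_down_le |].
    destruct hlo as [h|[h|[h|h]]]; (eapply Rle_trans; [| exact h]); apply fx_div_scale_le; lia.
  - eapply Rle_trans; [| apply round_up_ge].
    destruct hhi as [h|[h|[h|h]]]; (eapply Rle_trans; [exact h |]); apply fx_div_scale_le; lia.
Qed.

Definition citv : Type := (itv * itv)%type.
Definition citv_mem (X : citv) (z : C) : Prop :=
  itv_mem (fst X) (fst z) /\ itv_mem (snd X) (snd z).

Definition citv_mul (X Y : citv) : citv :=
  (itv_sub (itv_mul (fst X) (fst Y)) (itv_mul (snd X) (snd Y)),
   itv_add (itv_mul (fst X) (snd Y)) (itv_mul (snd X) (fst Y))).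
Definition citv_scal (c : itv) (X : citv) : citv := (itv_mul c (fst X), itv_mul c (snd X)).
Definition citv_add1 (X : citv) : citv := (itv_add (scale, scale) (fst X), snd X).

Lemma citv_mul_correct (X Y : citv) (z w : C) :
  citv_mem X z -> citv_mem Y w -> citv_mem (citv_mul X Y) (z * w)%C.
Proof.
  destruct z, w; intros [] []; split; simpl;
    [apply itv_sub_correct | apply itv_add_correct]; apply itv_mul_correct; assumption.
Qed.

Lemma citv_scal_correct (c : itv) (X : citv) (r : R) (z : C) :
  itv_mem c r -> citv_mem X z -> citv_mem (citv_scal c X) (RtoC r * z)%C.
Proof.
  destruct z as [z1 z2]; intros hr [h1 h2]; unfold citv_mem; simpl.
  replace (r * z1 - 0 * z2) with (r * z1) by ring.
  replace (r * z2 + 0 * z1) with (r * z2) by ring.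
  split; apply itv_mul_correct; assumption.
Qed.

Lemma citv_add1_correct (X : citv) (z : C) :
  citv_mem X z -> citv_mem (citv_add1 X) (1 + z)%C.
Proof.
  destruct z as [z1 z2]; intros [h1 h2]; unfold citv_mem; simpl.
  rewrite Rplus_0_l; split; [| exact h2].
  apply itv_add_correct; [unfold itv_mem; simpl; rewrite fx_scale; lra | exact h1].
Qed.

Definition citv_excludes0 (X : citv) : bool :=
  ((0 <? fst (fst X)) || (snd (fst X) <? 0) || (0 <? fst (snd X)) || (snd (snd X) <? 0))%Z.

Lemma citv_excludes0_correct (X : citv) (z : C) :
  citv_excludes0 X = true -> citv_mem X z -> z <> 0%C.
Proof.
  destruct X as [[a b] [c d]]; unfold citv_excludes0, citv_mem, itv_mem; simpl.
  rewrite !orb_true_iff, !Z.ltb_lt. intros h [h1 h2] ->; simpl in *.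
  destruct h as [[[h|h]|h]|h]; apply fx_lt in h; rewrite fx0 in h; lra.
Qed.

(** * Branch and bound *)

Definition mid (a : itv) : Z := ((fst a + snd a) / 2)%Z.
Definition width (a : itv) : Z := (snd a - fst a)%Z.

Definition bisect (f : itv -> bool) (a : itv) : bool :=
  if f (fst a, mid a) then f (mid a, snd a) else false.

Lemma bisect_sound (f : itv -> bool) (a : itv) (r : R) :
  bisect f a = true -> itv_mem a r -> exists b, f b = true /\ itv_mem b r.
Proof.
  unfold bisect, itv_mem; intros hf hr.
  destruct (f (fst a, mid a)) eqn:hl; [| discriminate].
  destruct (Rle_or_lt r (fx (mid a))).
  - exists (fst a, mid a); simpl; split; [exact hl | lra].
  - exists (mid a, snd a); simpl; split; [exact hf | lra].
Qed.

Section BranchAndBound.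

Variable check : itv -> itv -> itv -> bool.

Fixpoint certify (fuel : nat) (qi ui vi : itv) : bool :=
  if check qi ui vi then true else
  match fuel with
  | O => false
  | S fuel =>
    if ((width ui <=? width qi * 8) && (width vi <=? width qi * 8))%Z
    then bisect (fun a => certify fuel a ui vi) qi
    else if (width vi <=? width ui)%Z
    then bisect (fun a => certify fuel qi a vi) ui
    else bisect (fun a => certify fuel qi ui a) vi
  end.

Lemma certify_sound (fuel : nat) (qi ui vi : itv) (q u v : R) :
  certify fuel qi ui vi = true -> itv_mem qi q -> itv_mem ui u -> itv_mem vi v ->
  exists qj uj vj, check qj uj vj = true /\ itv_mem qj q /\ itv_mem uj u /\ itv_mem vj v.
Proof.
  revert qi ui vi; induction fuel as [|fuel IH]; intros qi ui vi hc hq hu hv; simpl in hc;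
    (destruct (check qi ui vi) eqn:hchk; [exists qi, ui, vi; tauto |]); [discriminate |].
  destruct (_ && _)%bool; [| destruct (_ <=? _)%Z].
  - destruct (bisect_sound _ _ _ hc hq) as (qj & h & hqj); exact (IH _ _ _ h hqj hu hv).
  - destruct (bisect_sound _ _ _ hc hu) as (uj & h & huj); exact (IH _ _ _ h hq huj hv).
  - destruct (bisect_sound _ _ _ hc hv) as (vj & h & hvj); exact (IH _ _ _ h hq hu hvj).
Qed.

End BranchAndBound.

(** * Certified enclosure of theta *)

Definition tail_radius : Z := (scale / 25 + 1)%Z.

Definition tail_encl : citv :=
  ((scale - tail_radius, scale + tail_radius), (- tail_radius, tail_radius))%Z.

Lemma tail_encl_correct (T : C) : Cmod T <= 1/25 -> citv_mem tail_encl (1 + T)%C.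
Proof.
  intro hT.
  assert (hr : 1/25 <= fx tail_radius).
  { assert (h : (scale <= tail_radius * 25)%Z) by (vm_compute; discriminate).
    apply fx_le in h; rewrite fx_scale, fx_mulr in h; lra. }
  assert (hm := Rmax_Cmod T).
  assert (h1 : Rabs (fst T) <= 1/25) by (eapply Rle_trans; [apply (Rmax_l _ (Rabs (snd T))) | lra]).
  assert (h2 : Rabs (snd T) <= 1/25) by (eapply Rle_trans; [apply (Rmax_r (Rabs (fst T))) | lra]).
  apply Rabs_le_between in h1, h2.
  destruct T as [t1 t2]; simpl in h1, h2.
  unfold citv_mem, itv_mem, tail_encl; cbn [fst snd Cplus RtoC].
  rewrite fx_sub, fx_add, fx_opp, fx_scale; lra.
Qed.

Definition theta_step (Qk : itv) (X H : citv) : citv :=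
  citv_add1 (citv_mul (citv_scal Qk X) H).

Fixpoint theta_encl (qi : itv) (X : citv) (P : itv) (n : nat) : citv :=
  match n with
  | O => tail_encl
  | S n => theta_step P X (theta_encl qi X (itv_mul qi P) n)
  end.

Lemma pow_le_inv256 (q : R) (k : nat) : 0 <= q <= 1/2 -> (7 <= k)%nat -> q ^ S k <= 1/256.
Proof.
  intros hq hk. apply Rle_trans with (q ^ 8); [apply pow_le_pow_of_le_one; [lra | lia] |].
  apply Rle_trans with ((1/2) ^ 8); [apply pow_incr; lra | simpl; lra].
Qed.

Lemma theta_tail_correct (q : R) (x : C) (k : nat) :
  0 <= q <= 1/2 -> Cmod x <= 5 -> (7 <= k)%nat ->
  exists L, is_series (theta_term q (RtoC (q ^ k) * x)) L /\ citv_mem tail_encl L.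
Proof.
  intros hq hx hk.
  assert (hy : q * Cmod (RtoC (q ^ k) * x) = q ^ S k * Cmod x).
  { rewrite Cmod_mult, Cmod_R, Rabs_pos_eq by (apply pow_le; lra); simpl; ring. }
  assert (hr : q ^ S k * Cmod x <= 5/256).
  { generalize (pow_le_inv256 q k hq hk) (Cmod_ge_0 x) (pow_le q (S k) ltac:(lra)); nra. }
  destruct (is_series_theta_near_one q (RtoC (q ^ k) * x)) as [T [hs hT]];
    [lra | rewrite hy; lra |].
  exists (1 + T)%C; split; [exact hs |]. apply tail_encl_correct.
  rewrite hy in hT. eapply Rle_trans; [exact hT |].
  apply Rmult_le_reg_r with (1 - q ^ S k * Cmod x); [lra |].
  unfold Rdiv; rewrite Rmult_assoc, Rinv_l; lra.
Qed.

Lemma theta_encl_correct (q : R) (x : C) (qi : itv) (X : citv) :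
  itv_mem qi q -> 0 <= q <= 1/2 -> Cmod x <= 5 -> citv_mem X x ->
  forall n k P, (7 <= k + n)%nat -> itv_mem P (q ^ S k) ->
  exists L, is_series (theta_term q (RtoC (q ^ k) * x)) L /\ citv_mem (theta_encl qi X P n) L.
Proof.
  intros hqi hq hx hX n; induction n as [|n IH]; intros k P hk hP.
  - apply theta_tail_correct; [exact hq | exact hx | lia].
  - destruct (IH (S k) (itv_mul qi P)) as [L [hs hL]];
      [lia | change (q ^ S (S k)) with (q * q ^ S k); apply itv_mul_correct; assumption |].
    exists (1 + RtoC (q ^ S k) * x * L)%C; split.
    + assert (hy : (RtoC (q ^ S k) * x = RtoC q * (RtoC (q ^ k) * x))%C).
      { simpl pow; rewrite RtoC_mult; ring. }
      rewrite hy in hs |- *. apply is_series_theta_shift, hs.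
    + apply citv_add1_correct, citv_mul_correct; [apply citv_scal_correct |]; assumption.
Qed.

Definition theta_check (qi ui vi : itv) : bool :=
  citv_excludes0 (theta_encl qi (ui, vi) qi 7).

Lemma theta_check_correct (qi ui vi : itv) (q u v : R) :
  theta_check qi ui vi = true -> itv_mem qi q -> itv_mem ui u -> itv_mem vi v ->
  0 <= q <= 1/2 -> Cmod (u, v) <= 5 ->
  exists l : C, is_series (theta_term q (u, v)) l /\ l <> RtoC 0.
Proof.
  intros hc hqi hu hv hq hx.
  destruct (theta_encl_correct q (u, v) qi (ui, vi) hqi hq hx (conj hu hv) 7 0 qi)
    as [L [hs hL]]; [lia | rewrite pow_1; exact hqi |].
  exists L; split.
  - rewrite pow_O, Cmult_1_l in hs; exact hs.
  - exact (citv_excludes0_correct _ _ hc hL).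
Qed.

Lemma fx_half_scale : fx (scale / 2) = 1/2.
Proof.
  assert (h : scale = (2 * (scale / 2))%Z) by reflexivity.
  unfold fx; rewrite h at 2; rewrite mult_IZR.
  field; apply not_0_IZR; discriminate.
Qed.

Lemma certify_theta_box :
  certify theta_check 30 (0, scale / 2)%Z (-3 * scale, 0)%Z (-3 * scale, 3 * scale)%Z = true.
Proof. vm_compute. reflexivity. Qed.

Theorem proposition2 (q : R) (hq0 : 0 < q) (hq1 : q <= 1/2) (x : C)
  (hre : -3 <= Re x <= 0) (him : -3 <= Im x <= 3) :
  exists l : C, is_series (theta_term q x) l /\ l <> RtoC 0.
Proof.
  destruct x as [u v]; unfold Re, Im in hre, him; simpl in hre, him.
  assert (hx : Cmod (u, v) <= 5).
  { unfold Cmod; simpl. rewrite <- (sqrt_pow2 5) by lra. apply sqrt_le_1_alt. nra. }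
  destruct (certify_sound theta_check 30 _ _ _ q u v certify_theta_box)
    as (qi & ui & vi & hc & hqi & hui & hvi);
    unfold itv_mem; cbn [fst snd]; rewrite ?fx_half_scale, ?fx_mul_scale, ?fx0; try lra.
  exact (theta_check_correct _ _ _ q u v hc hqi hui hvi ltac:(lra) hx).
Qed.
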